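(* Let $g(\mathbf{x})=\pi\,\phi_1(\mathbf{x})+(1-\pi)\,\phi_2(\mathbf{x})$, $\mathbf{x}\in\mathbb{R}^D$, be a mixture of two multivariate normal densities $\phi_j(\mathbf{x})=\phi(\mathbf{x};\boldsymbol{\mu}_j,\Sigma_j)$. Then for $\alpha\in[0,1]$, $$\kappa(\alpha)=[p(\alpha)]^2\,[1-\alpha\bar\alpha\,p(\alpha)],$$ where $\bar\alpha=1-\alpha$ and $p(\alpha)=(\boldsymbol{\mu}_2-\boldsymbol{\mu}_1)'\Sigma_1^{-1}S_\alpha^{-1}\Sigma_2^{-1}S_\alpha^{-1}\Sigma_2^{-1}S_\alpha^{-1}\Sigma_1^{-1}(\boldsymbol{\mu}_2-\boldsymbol{\mu}_1)$.
   Context: $\phi(\mathbf{x};\boldsymbol{\mu},\Sigma)$ is the normal density with mean $\boldsymbol{\mu}$ and positive definite covariance $\Sigma$. $S_\alpha=\bar\alpha\Sigma_1^{-1}+\alpha\Sigma_2^{-1}$, and the ridgeline is $\mathbf{x}^*(\alpha)=S_\alpha^{-1}[\bar\alpha\Sigma_1^{-1}\boldsymbol{\mu}_1+\alpha\Sigma_2^{-1}\boldsymbol{\mu}_2]$. Write $\phi_j(\alpha)=\phi_j(\mathbf{x}^*(\alpha))$, with primes denoting derivatives in $\alpha$. The curvature function is $$\kappa(\alpha)=\frac{\phi_2''(\alpha)\phi_1'(\alpha)}{\phi_2(\alpha)\phi_1(\alpha)}-\frac{\phi_1''(\alpha)\phi_2'(\alpha)}{\phi_1(\alpha)\phi_2(\alpha)}.$$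 *)

From HB Require Import structures.
From mathcomp Require Import all_boot all_order all_algebra.
From mathcomp Require Import all_classical all_reals all_analysis.
Set Implicit Arguments. Unset Strict Implicit. Unset Printing Implicit Defensive.
Import Order.TTheory GRing.Theory Num.Theory.
Local Open Scope ring_scope.

Section Defs.
Variables (R : realType) (D : nat).

Definition bilin (u : 'cV[R]_D) (A : 'M[R]_D) (v : 'cV[R]_D) : R :=
  (u^T *m A *m v) 0 0.

Definition posdef (S : 'M[R]_D) : Prop :=
  S^T = S /\ forall v : 'cV[R]_D, v != 0 -> 0 < bilin v S v.

Definition normal_pdf (mu : 'cV[R]_D) (S : 'M[R]_D) (x : 'cV[R]_D) : R :=
  expR (- (bilin (x - mu) (invmx S) (x - mu)) / 2)
  / Num.sqrt ((2 * pi) ^+ D * \det S).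

Definition Salpha (S1 S2 : 'M[R]_D) (a : R) : 'M[R]_D :=
  (1 - a) *: invmx S1 + a *: invmx S2.

Definition ridgeline (mu1 mu2 : 'cV[R]_D) (S1 S2 : 'M[R]_D) (a : R) : 'cV[R]_D :=
  invmx (Salpha S1 S2 a) *m ((1 - a) *: (invmx S1 *m mu1) + a *: (invmx S2 *m mu2)).

Definition phi_along (mu1 mu2 : 'cV[R]_D) (S1 S2 : 'M[R]_D) (mu : 'cV[R]_D)
  (S : 'M[R]_D) : R -> R :=
  fun a => normal_pdf mu S (ridgeline mu1 mu2 S1 S2 a).

Definition kappa (mu1 mu2 : 'cV[R]_D) (S1 S2 : 'M[R]_D) (a : R) : R :=
  let f1 := phi_along mu1 mu2 S1 S2 mu1 S1 in
  let f2 := phi_along mu1 mu2 S1 S2 mu2 S2 in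
  derive1n 2 f2 a * derive1 f1 a / (f2 a * f1 a)
  - derive1n 2 f1 a * derive1 f2 a / (f1 a * f2 a).

Definition ppoly (mu1 mu2 : 'cV[R]_D) (S1 S2 : 'M[R]_D) (a : R) : R :=
  let Si := invmx (Salpha S1 S2 a) in
  bilin (mu2 - mu1)
    (invmx S1 *m Si *m invmx S2 *m Si *m invmx S2 *m Si *m invmx S1)
    (mu2 - mu1).

Definition mixture2 (w : R) (mu1 mu2 : 'cV[R]_D) (S1 S2 : 'M[R]_D)
  (x : 'cV[R]_D) : R :=
  w * normal_pdf mu1 S1 x + (1 - w) * normal_pdf mu2 S2 x.

End Defs.

(* Write A = Σ1⁻¹, B = Σ2⁻¹, G = S_α⁻¹ and d = μ2 - μ1.  Because G inverts
   ᾱ A + α B, the matrices A G B and B G A coincide; hence x*(α) - μ1 = α G B d,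
   μ2 - x*(α) = ᾱ G A d and x*'(α) = G A G B d.  The logarithmic derivatives of
   φ1 and φ2 along the ridgeline are therefore h1 = -α p and h2 = ᾱ p.  With
   φj'' = φj (hj² + hj'), the curvature is h1 h2 (h2 - h1) + h1 h2' - h2 h1':
   here h2 - h1 = p and the terms in p' cancel, leaving p² (1 - α ᾱ p). *)

From Pilot Require Import Defs.
From HB Require Import structures.
From mathcomp Require Import all_boot all_order all_algebra.
From mathcomp Require Import all_classical all_reals all_analysis.
From mathcomp Require Import ring lra.
Import Order.TTheory GRing.Theory Num.Theory.
Import numFieldNormedType.Exports.
Local Open Scope ring_scope.

Section MatrixPaths.
Context {R : realFieldType}.
Implicit Types t : R.

Lemma is_derive_mx {m n} (M : R -> 'M[R]_(m, n)) t (dM : 'M[R]_(m, n)) :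
  (forall i j, is_derive t 1 (fun x => M x i j) (dM i j)) -> is_derive t 1 M dM.
Proof.
move=> dMij; have dM_t : derivable M t 1.
  by apply/derivable_mxP => i j; case: (dMij i j).
apply: DeriveDef => //; rewrite derive_mx //; apply/matrixP => i j.
by rewrite mxE; case: (dMij i j).
Qed.

Lemma is_derive_mx_entry {m n} {M : R -> 'M[R]_(m, n)} {t dM} i j :
  is_derive t 1 M dM -> is_derive t 1 (fun x => M x i j) (dM i j).
Proof.
case=> dM_t <-; apply: DeriveDef; first exact: (derivable_mxP M t 1).1 dM_t i j.
by rewrite derive_mx // mxE.
Qed.

Lemma is_derive_mulmx {m n p} {M : R -> 'M[R]_(m, n)} {N : R -> 'M[R]_(n, p)}
    {t dM dN} :
  is_derive t 1 M dM -> is_derive t 1 N dN ->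
  is_derive t 1 (fun x => M x *m N x) (dM *m N t + M t *m dN).
Proof.
move=> dM_t dN_t; apply: is_derive_mx => i j.
have -> : (fun x => (M x *m N x) i j) =
    \sum_(l < n) ((fun x => M x i l) * (fun x => N x l j)).
  by apply/funext => x; rewrite mxE fct_sumE.
apply: is_derive_eq.
  apply: is_derive_sum => l; apply: is_deriveM; exact: is_derive_mx_entry.
rewrite !mxE -big_split /=; apply: eq_bigr => l _.
by rewrite /GRing.scale /= addrC; congr (_ + _); rewrite mulrC.
Qed.

Lemma derivable_mulmx {m n p} (M : R -> 'M[R]_(m, n)) (N : R -> 'M[R]_(n, p)) t :
  derivable M t 1 -> derivable N t 1 -> derivable (fun x => M x *m N x) t 1.
Proof.
by move=> /derivableP dM_t /derivableP dN_t; case: (is_derive_mulmx dM_t dN_t).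
Qed.

Lemma is_derive_trmx {m n} {M : R -> 'M[R]_(m, n)} {t dM} :
  is_derive t 1 M dM -> is_derive t 1 (fun x => (M x)^T) dM^T.
Proof.
move=> dM_t; apply: is_derive_mx => i j; rewrite mxE.
have -> : (fun x => (M x)^T i j) = (fun x => M x j i).
  by apply/funext => x; rewrite mxE.
exact: is_derive_mx_entry.
Qed.

Lemma is_derive_mx_line {m n} (M0 M1 : 'M[R]_(m, n)) t :
  is_derive t 1 (fun x => M0 + x *: M1) M1.
Proof.
apply: is_derive_mx => i j.
have -> : (fun x => (M0 + x *: M1) i j) = cst (M0 i j) + id * cst (M1 i j).
  by apply/funext => x; rewrite !mxE.
by apply: is_derive_eq; rewrite /GRing.scale /= mulr0 !add0r mulr1.
Qed.

End MatrixPaths.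

Section InverseAlongLine.
Context {R : realFieldType} {n : nat}.
Variables M0 M1 : 'M[R]_n.
Implicit Types t : R.

Definition poly_line : 'M[{poly R}]_n := map_mx polyC M0 + 'X *: map_mx polyC M1.

Lemma map_horner_poly_line t : map_mx (horner_eval t) poly_line = M0 + t *: M1.
Proof. by apply/matrixP => i j; rewrite !mxE /horner_eval !hornerE. Qed.

Lemma det_line t : \det (M0 + t *: M1) = (\det poly_line).[t].
Proof. by rewrite -map_horner_poly_line det_map_mx. Qed.

Lemma adj_line t i j : \adj (M0 + t *: M1) i j = (\adj poly_line i j).[t].
Proof. by rewrite -map_horner_poly_line -map_mx_adj mxE. Qed.

Lemma unitmx_line_near t : M0 + t *: M1 \in unitmx ->
  \forall x \near t, M0 + x *: M1 \in unitmx.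
Proof.
rewrite unitmxE unitfE det_line => det_t_neq0.
have := cvgr_neq0 _ (@continuous_horner _ (\det poly_line) t) det_t_neq0.
move=> det_near_neq0; near=> x; rewrite unitmxE unitfE det_line.
near: x; exact: det_near_neq0.
Unshelve. all: by end_near.
Qed.

Lemma derivable_invmx_line t : M0 + t *: M1 \in unitmx ->
  derivable (fun x : R => invmx (M0 + x *: M1)) t 1.
Proof.
move=> unit_t.
(* Cramer's rule: near [t] the inverse is a matrix of rational functions. *)
pose cramer x := \matrix_(i, j) (((\det poly_line).[x])^-1 * (\adj poly_line i j).[x]).
apply: (@near_eq_derivable _ _ _ cramer).
  near=> x; have : M0 + x *: M1 \in unitmx by near: x; exact: unitmx_line_near.
  rewrite /invmx => ->; apply/matrixP => i j.
  by rewrite !mxE det_line; congr (_ * _); have := adj_line x i j; rewrite !mxE => ->.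
apply/derivable_mxP => i j.
have -> : (fun x => cramer x i j) =
    (fun x => ((\det poly_line).[x])^-1) * horner (\adj poly_line i j).
  by apply/funext => x; rewrite mxE.
apply: derivableM; last exact: derivable_horner.
apply: derivableV; last exact: derivable_horner.
by rewrite -det_line -unitfE -unitmxE.
Unshelve. all: by end_near.
Qed.

Lemma is_derive_invmx_line t : M0 + t *: M1 \in unitmx ->
  is_derive t 1 (fun x : R => invmx (M0 + x *: M1))
    (- (invmx (M0 + t *: M1) *m M1 *m invmx (M0 + t *: M1))).
Proof.
move=> unit_t; set G := fun x : R => invmx (M0 + x *: M1).
have dG : is_derive t 1 G ('D_1 G t) by exact/derivableP/derivable_invmx_line.
have dGM := is_derive_mulmx dG (is_derive_mx_line M0 M1 t).
have dI : is_derive t 1 (fun x => G x *m (M0 + x *: M1)) 0.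
  apply: (near_eq_is_derive _ (is_derive_cst 1%:M t 1)).
  near=> x; rewrite /G mulVmx //; near: x; exact: unitmx_line_near.
have DGS : 'D_1 G t *m (M0 + t *: M1) = - (G t *m M1).
  by apply/eqP; rewrite -addr_eq0 -dGM.(derive_val) dI.(derive_val).
rewrite -[X in is_derive _ _ _ X]/(- (G t *m M1 *m G t)) -mulNmx -DGS.
by rewrite -mulmxA mulmxV // mulmx1.
Unshelve. all: by end_near.
Qed.

End InverseAlongLine.

Section PositiveDefinite.
Local Open Scope classical_set_scope.
Context {R : realType} {n : nat}.
Implicit Types (S A B : 'M[R]_n) (v : 'cV[R]_n).

Lemma posdef_unitmx {S} : posdef S -> S \in unitmx.
Proof.
case=> _ S_pos; rewrite unitmxE unitfE; apply/negP => /det0P[v v_neq0 vS0].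
have := S_pos v^T; rewrite trmx_eq0 => /(_ v_neq0).
by rewrite /bilin trmxK vS0 mul0mx mxE ltxx.
Qed.

Lemma posdef_invmx {S} : posdef S -> posdef (invmx S).
Proof.
move=> pdS; have S_unit := posdef_unitmx pdS; case: pdS => S_sym S_pos.
split=> [|v v_neq0]; first by rewrite trmx_inv S_sym.
have v_eq : v = S *m (invmx S *m v) by rewrite mulmxA mulmxV // mul1mx.
have w_neq0 : invmx S *m v != 0.
  by apply: contraNneq v_neq0 => w0; rewrite v_eq w0 mulmx0.
have := S_pos _ w_neq0; rewrite /bilin trmx_mul trmx_inv S_sym.
by rewrite -[_ *m S *m _]mulmxA (mulmxA S) mulmxV // mul1mx.
Qed.

Lemma posdef_conv {A B} {a : R} : posdef A -> posdef B -> 0 <= a <= 1 ->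
  posdef ((1 - a) *: A + a *: B).
Proof.
case=> A_sym A_pos [B_sym B_pos] a01.
split=> [|v v_neq0]; first by rewrite linearD !linearZ /= A_sym B_sym.
have := A_pos v v_neq0; have := B_pos v v_neq0; case/andP: a01.
rewrite /bilin mulmxDr mulmxDl -!scalemxAr -!scalemxAl !mxE.
by move=> *; nra.
Qed.

Lemma posdef1 : posdef (1%:M : 'M[R]_n).
Proof.
split=> [|v v_neq0]; first by rewrite tr_scalar_mx.
rewrite /bilin mulmx1 mxE.
have [i vi_neq0] : exists i, v i 0 != 0.
  apply/existsP; apply: contraNT v_neq0 => /existsPn v0.
  by apply/eqP/matrixP => i j; rewrite ord1 mxE; exact/eqP/negbNE/v0.
rewrite (bigD1 i) //= mxE ltr_wpDr ?sumr_ge0 // => [j _|].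
  by rewrite mxE -expr2 sqr_ge0.
by rewrite -expr2 exprn_even_gt0.
Qed.

Lemma posdef_det_gt0 {S} : posdef S -> 0 < \det S.
Proof.
move=> pdS; rewrite ltNge; apply/negP => detS_le0.
(* [f t = det((1 - t) 1 + t S)] goes from 1 to [det S] without vanishing,
   since all these matrices are positive definite. *)
pose f := horner (\det (poly_line 1%:M (S - 1%:M))).
have fE t : f t = \det ((1 - t) *: 1%:M + t *: S).
  by rewrite /f -det_line scalerBr scalerBl scale1r addrA addrAC.
have f_cont : {within `[0, 1], continuous f}.
  by apply: continuous_subspaceT; exact: continuous_horner.
have [|c c01 fc0] := @IVT R f 0 1 0 ler01 f_cont.
  rewrite !fE subrr subr0 !scale0r !scale1r addr0 add0r det1.
  by rewrite ge_min detS_le0 orbT le_max ler01.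
move: c01; rewrite in_itv /= => c01.
have := posdef_unitmx (posdef_conv posdef1 pdS c01).
by rewrite unitmxE unitfE -fE fc0 eqxx.
Qed.

End PositiveDefinite.

Section RidgelineAlgebra.
Context {R : comRingType} {n : nat} {A B G : 'M[R]_n} {b : R}.
Let S := (1 - b) *: A + b *: B.
Hypotheses (GS1 : G *m S = 1%:M) (SG1 : S *m G = 1%:M).

Lemma conv_inv_swap : A *m G *m B = B *m G *m A.
Proof.
(* Expand [A G S = A = S G A] and [B G S = B = S G B]. *)
have GS_id (X : 'M[R]_n) : X *m G *m S = X by rewrite -mulmxA GS1 mulmx1.
have SG_id (X : 'M[R]_n) : S *m G *m X = X by rewrite SG1 mul1mx.
have swap_b : b *: (A *m G *m B) = b *: (B *m G *m A).
  move: (GS_id A); rewrite -{2}(SG_id A) /S mulmxDr -!scalemxAr !mulmxDl -!scalemxAl.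
  by move/addrI.
have swap_1b : (1 - b) *: (A *m G *m B) = (1 - b) *: (B *m G *m A).
  move: (GS_id B); rewrite -{2}(SG_id B) /S mulmxDr -!scalemxAr !mulmxDl -!scalemxAl.
  by move/addIr/esym.
by rewrite -[LHS]scale1r -(subrK b 1) scalerDl swap_b swap_1b -scalerDl subrK scale1r.
Qed.

Variables m1 m2 : 'cV[R]_n.
Let d := m2 - m1.
Let c := (1 - b) *: (A *m m1) + b *: (B *m m2).
Let x := G *m c.

Lemma ridgeline_subl : x - m1 = b *: (G *m B *m d).
Proof.
rewrite /x -[m1]mul1mx -GS1 -mulmxA -mulmxBr -mulmxA scalemxAr; congr (G *m _).
by rewrite /c /S mulmxDl -!scalemxAl /d mulmxBr scalerBr opprD addrACA subrr add0r.
Qed.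

Lemma ridgeline_subr : m2 - x = (1 - b) *: (G *m A *m d).
Proof.
rewrite /x -[m2]mul1mx -GS1 -mulmxA -mulmxBr -mulmxA scalemxAr; congr (G *m _).
by rewrite /c /S mulmxDl -!scalemxAl /d mulmxBr scalerBr opprD addrACA subrr addr0.
Qed.

(* The left-hand side is the product-rule derivative of [x = G c], with [G' = - G (B - A) G]. *)
Lemma ridgeline_velocity :
  - (G *m (B - A) *m G) *m c + G *m (B *m m2 - A *m m1) = G *m A *m G *m B *m d.
Proof.
have -> : - (G *m (B - A) *m G) *m c + G *m (B *m m2 - A *m m1) =
    G *m (B *m (m2 - x) + A *m (x - m1)).
  rewrite mulNmx -!mulmxA -/x -mulmxN -mulmxDr; congr (G *m _).
  rewrite !mulmxBr mulmxBl opprB [RHS]addrC addrACA [RHS]addrACA.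
  by congr (_ + _); rewrite addrC.
rewrite ridgeline_subl ridgeline_subr -!scalemxAr !mulmxA -conv_inv_swap.
by rewrite -scalerDl subrK scale1r !mulmxA.
Qed.

Hypotheses (A_sym : A^T = A) (B_sym : B^T = B) (G_sym : G^T = G).

Let swapl (X : 'M[R]_(1, n)) : X *m A *m G *m B = X *m B *m G *m A.
Proof. by rewrite -!mulmxA (mulmxA A) conv_inv_swap !mulmxA. Qed.

Let p := (d^T *m (A *m G *m B *m G *m B *m G *m A) *m d) 0 0.

Let pE : p = (d^T *m (A *m G *m B) *m G *m (A *m G *m B) *m d) 0 0.
Proof. by rewrite /p !mulmxA (swapl (d^T *m A *m G *m B *m G)). Qed.

Lemma ridgeline_quadl :
  ((x - m1)^T *m A *m (G *m A *m G *m B *m d)) 0 0 = b * p.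
Proof.
rewrite ridgeline_subl linearZ /= !trmx_mul B_sym G_sym -!scalemxAl mxE pE.
by congr (b * _); rewrite !mulmxA (swapl d^T).
Qed.

Lemma ridgeline_quadr :
  ((x - m2)^T *m B *m (G *m A *m G *m B *m d)) 0 0 = - ((1 - b) * p).
Proof.
rewrite -opprB ridgeline_subr linearN linearZ /= !trmx_mul A_sym G_sym.
by rewrite !mulNmx -!scalemxAl 2!mxE pE !mulmxA.
Qed.

End RidgelineAlgebra.

Section NormalAlongPath.
Context {R : realType} {n : nat}.
Implicit Types (t : R) (r : R -> 'cV[R]_n).

Lemma bilinC (M : 'M[R]_n) (u v : 'cV[R]_n) : M^T = M -> bilin u M v = bilin v M u.
Proof.
move=> M_sym; have trE (X : 'M[R]_1) : X 0 0 = X^T 0 0 by rewrite mxE.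
by rewrite /bilin [LHS]trE !trmx_mul trmxK M_sym mulmxA.
Qed.

Lemma is_derive_bilin_path (M : 'M[R]_n) (m : 'cV[R]_n) r t dr : M^T = M ->
  is_derive t 1 r dr ->
  is_derive t 1 (fun x => bilin (r x - m) M (r x - m)) (2 * bilin (r t - m) M dr).
Proof.
move=> M_sym dr_t.
have dr_m : is_derive t 1 (r - cst m) dr by apply: is_derive_eq; rewrite subr0.
apply: is_derive_eq (is_derive_mx_entry 0 0 (is_derive_mulmx
  (is_derive_mulmx (is_derive_trmx dr_m) (is_derive_cst M t 1)) dr_m)) _.
rewrite mulmx0 addr0 mxE.
change (bilin dr M (r t - m) + bilin (r t - m) M dr = 2 * bilin (r t - m) M dr).
rewrite bilinC //; ring.
Qed.

Lemma is_derive_normal_pdf_path (mu : 'cV[R]_n) {S : 'M[R]_n} {r t dr} : S^T = S ->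
  is_derive t 1 r dr ->
  is_derive t 1 (fun x => Defs.normal_pdf mu S (r x))
    (Defs.normal_pdf mu S (r t) * - bilin (r t - mu) (invmx S) dr).
Proof.
move=> S_sym dr_t; pose k := Num.sqrt ((2 * pi) ^+ n * \det S).
set q := fun x => bilin (r x - mu) (invmx S) (r x - mu).
have dq : is_derive t 1 q (2 * bilin (r t - mu) (invmx S) dr).
  by apply: is_derive_bilin_path dr_t; rewrite trmx_inv S_sym.
have halfE (y : R) : - y / 2 = - 2^-1 * y by ring.
have halfK (y : R) : - 2^-1 * (2 * y) = - y.
  by rewrite mulNr mulrA mulVf ?pnatr_eq0 // mul1r.
have -> : (fun x => Defs.normal_pdf mu S (r x)) = k^-1 *: (expR \o (- 2^-1) *: q).
  by apply/funext => x; rewrite /Defs.normal_pdf halfE mulrC.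
apply: is_derive_eq; rewrite /Defs.normal_pdf -/k -/(q t) halfE /GRing.scale /=.
by rewrite halfK; ring.
Qed.

Lemma normal_pdf_gt0 (mu : 'cV[R]_n) (S : 'M[R]_n) (x : 'cV[R]_n) :
  posdef S -> 0 < Defs.normal_pdf mu S x.
Proof.
move=> pdS; rewrite divr_gt0 ?expR_gt0 // sqrtr_gt0 mulr_gt0 ?posdef_det_gt0 //.
by rewrite exprn_gt0 // mulr_gt0 // pi_gt0.
Qed.

End NormalAlongPath.

Lemma derive1n2_logderiv {R : realFieldType} (f h : R -> R) (a dh : R) :
  (\forall x \near a, is_derive x (1 : R) f (f x * h x)) -> is_derive a 1 h dh ->
  derive1n 2 f a = f a * (h a ^+ 2 + dh).
Proof.
move=> df dh_a; have df_a : is_derive a 1 f (f a * h a) := nbhs_singleton df.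
have df_near : \forall x \near a, derive1 f x = (f * h) x.
  by apply: filterS df => x dfx; rewrite derive1E dfx.(derive_val).
change (derive1 (derive1 f) a = f a * (h a ^+ 2 + dh)).
rewrite derive1E (near_eq_derive (1 : R) df_near) (is_deriveM df_a dh_a).(derive_val).
by rewrite /GRing.scale /=; ring.
Qed.

Section Ridgeline.
Variables (R : realType) (D : nat) (mu1 mu2 : 'cV[R]_D) (S1 S2 : 'M[R]_D).
Hypotheses (pdS1 : posdef S1) (pdS2 : posdef S2).
Let A := invmx S1.
Let B := invmx S2.
Let G a := invmx (Salpha S1 S2 a).
Let P := ppoly mu1 mu2 S1 S2.
Let f1 := phi_along mu1 mu2 S1 S2 mu1 S1.
Let f2 := phi_along mu1 mu2 S1 S2 mu2 S2.

Let A_sym : A^T = A. Proof. by case: (posdef_invmx pdS1). Qed.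
Let B_sym : B^T = B. Proof. by case: (posdef_invmx pdS2). Qed.
Let G_sym a : (G a)^T = G a.
Proof. by rewrite trmx_inv /Salpha linearD !linearZ /= A_sym B_sym. Qed.

Lemma SalphaE a : Salpha S1 S2 a = A + a *: (B - A).
Proof. by rewrite /Salpha scalerBl scale1r scalerBr addrA addrAC. Qed.

Lemma Salpha_unitmx_near a : Salpha S1 S2 a \in unitmx ->
  \forall x \near a, Salpha S1 S2 x \in unitmx.
Proof.
rewrite SalphaE => /unitmx_line_near unit_near.
by near=> x; rewrite SalphaE; near: x.
Unshelve. all: by end_near.
Qed.

Section AtUnit.
Context {a : R}.
Hypothesis Ua : Salpha S1 S2 a \in unitmx.

Let GS1 : G a *m Salpha S1 S2 a = 1%:M. Proof. exact: mulVmx. Qed.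
Let SG1 : Salpha S1 S2 a *m G a = 1%:M. Proof. exact: mulmxV. Qed.

Lemma is_derive_invmx_Salpha : is_derive a 1 G (- (G a *m (B - A) *m G a)).
Proof.
have -> : G = fun x => invmx (A + x *: (B - A)) by apply/funext => x; rewrite /G SalphaE.
by apply: is_derive_invmx_line; rewrite -SalphaE.
Qed.

Lemma is_derive_ridgeline :
  is_derive a 1 (ridgeline mu1 mu2 S1 S2) (G a *m A *m G a *m B *m (mu2 - mu1)).
Proof.
have dc : is_derive a 1 (fun x => (1 - x) *: (A *m mu1) + x *: (B *m mu2))
    (B *m mu2 - A *m mu1).
  have -> : (fun x => (1 - x) *: (A *m mu1) + x *: (B *m mu2)) =
      (fun x => A *m mu1 + x *: (B *m mu2 - A *m mu1)).
    by apply/funext => x; rewrite scalerBl scale1r scalerBr addrA addrAC.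
  exact: is_derive_mx_line.
apply: is_derive_eq (is_derive_mulmx is_derive_invmx_Salpha dc) _.
exact: ridgeline_velocity GS1 SG1 mu1 mu2.
Qed.

Lemma derivable_ppoly : derivable P a 1.
Proof.
have dG : derivable G a 1 by case: is_derive_invmx_Salpha.
apply: (derivable_mxP _ a 1).1 0 0.
apply: derivable_mulmx; [apply: derivable_mulmx | exact: derivable_cst].
  exact: derivable_cst.
do 3!(apply: derivable_mulmx; last exact: derivable_cst;
      apply: derivable_mulmx; last exact: dG).
exact: derivable_cst.
Qed.

Lemma is_derive_phi1 : is_derive a 1 f1 (f1 a * - (a * P a)).
Proof.
apply: is_derive_eq (is_derive_normal_pdf_path mu1 (proj1 pdS1) is_derive_ridgeline) _.
by rewrite /bilin (ridgeline_quadl GS1 SG1 mu1 mu2 B_sym (G_sym a)).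
Qed.

Lemma is_derive_phi2 : is_derive a 1 f2 (f2 a * ((1 - a) * P a)).
Proof.
apply: is_derive_eq (is_derive_normal_pdf_path mu2 (proj1 pdS2) is_derive_ridgeline) _.
by rewrite /bilin (ridgeline_quadr GS1 SG1 mu1 mu2 A_sym (G_sym a)) opprK.
Qed.

End AtUnit.

Lemma kappa_Salpha_unitmx a : Salpha S1 S2 a \in unitmx ->
  kappa mu1 mu2 S1 S2 a = P a ^+ 2 * (1 - a * (1 - a) * P a).
Proof.
move=> Ua; have Ua_near := Salpha_unitmx_near a Ua.
have dP := derivableP (derivable_ppoly Ua).
have d2f1 : derive1n 2 f1 a = f1 a * ((- (a * P a)) ^+ 2 - (a * 'D_1 P a + P a)).
  apply: (derive1n2_logderiv _ (- (id * P))).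
    by apply: filterS Ua_near => x /is_derive_phi1.
  by apply: is_derive_eq; rewrite /GRing.scale /= mulr1.
have d2f2 : derive1n 2 f2 a = f2 a * (((1 - a) * P a) ^+ 2 + ((1 - a) * 'D_1 P a - P a)).
  apply: (derive1n2_logderiv _ ((cst 1 - id) * P)).
    by apply: filterS Ua_near => x /is_derive_phi2.
  by apply: is_derive_eq; rewrite /GRing.scale /= sub0r mulrN1.
have f1_neq0 : f1 a != 0 by rewrite gt_eqF // normal_pdf_gt0.
have f2_neq0 : f2 a != 0 by rewrite gt_eqF // normal_pdf_gt0.
rewrite /kappa -/f1 -/f2 d2f1 d2f2 !derive1E.
rewrite (is_derive_phi1 Ua).(derive_val) (is_derive_phi2 Ua).(derive_val).
by field; rewrite f1_neq0 f2_neq0.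
Qed.

End Ridgeline.

Theorem theorem3 (R : realType) (D : nat) (w : R)
  (mu1 mu2 : 'cV[R]_D) (S1 S2 : 'M[R]_D)
  (g : 'cV[R]_D -> R) (hw : 0 <= w <= 1)
  (hg : g = mixture2 w mu1 mu2 S1 S2)
  (hS1 : posdef S1) (hS2 : posdef S2) (a : R) (ha : 0 <= a <= 1) :
  kappa mu1 mu2 S1 S2 a
  = (ppoly mu1 mu2 S1 S2 a) ^+ 2
    * (1 - a * (1 - a) * ppoly mu1 mu2 S1 S2 a).
Proof.
apply: kappa_Salpha_unitmx => //.
by apply/posdef_unitmx/posdef_conv => //; exact: posdef_invmx.
Qed.
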